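(* Let $\Gamma$ be a balanced two-dimensional simplicial complex, and let $W\subseteq V(\Gamma)$ be such that $\tilde H_2(\Gamma[W];\mathbf{k})\neq 0$ but $\tilde H_2(\Gamma[W'];\mathbf{k})=0$ for every proper subset $W'\subsetneq W$. Then $f_2(\Gamma[W])\ge 2|W|-4$.
   Context: A simplicial complex $\Gamma$ on a finite vertex set $V=V(\Gamma)$ is a family of subsets of $V$ (faces) closed under taking subsets; its dimension is $\max\{|F|:F\in\Gamma\}-1$; $f_2$ counts faces with 3 elements. For $W\subseteq V$, $\Gamma[W]=\{F\in\Gamma:F\subseteq W\}$. A two-dimensional complex is balanced if its vertex set can be partitioned into three sets $V_1,V_2,V_3$ such that every face contains at most one vertex from each $V_j$. Fix a field $\mathbf{k}$; $\tilde H_j(\cdot;\mathbf{k})$ is reduced simplicial homology. *)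

From HB Require Import structures.
From mathcomp Require Import all_boot all_order all_algebra.
Set Implicit Arguments. Unset Strict Implicit. Unset Printing Implicit Defensive.
Import GRing.Theory.
Local Open Scope ring_scope.

Section Simplicial.
Variable T : finType.

Definition is_complex (G : {set {set T}}) : Prop :=
  forall F H : {set T}, F \in G -> H \subset F -> H \in G.

(* dimension = max face size - 1 ; dimension 2 means max face size is 3 *)
Definition is_two_dim (G : {set {set T}}) : Prop :=
  (exists2 F, F \in G & #|F| = 3%N) /\ (forall F, F \in G -> (#|F| <= 3)%N).

(* balanced: partition V into V_1,V_2,V_3 (colour classes of c) such that
   every face contains at most one vertex of each class *)
Definition balanced (G : {set {set T}}) : Prop :=
  exists c : T -> 'I_3, forall F, F \in G -> {in F &, injective c}.

Definition induced (G : {set {set T}}) (W : {set T}) : {set {set T}} :=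
  [set F in G | F \subset W].

Definition f2 (G : {set {set T}}) : nat := #|[set F in G | #|F| == 3%N]|.

(* Chains are row vectors
   indexed by all subsets of T (via enum_rank); the j-chains are spanned by
   the faces with j+1 elements (the empty face gives the augmentation).
   Orientation: vertices are ordered by enum_rank. *)
Definition NS := #|{set T}|.

(* row space = span of the faces of G with exactly s elements *)
Definition chains (k : fieldType) (G : {set {set T}}) (s : nat) : 'M[k]_(NS, NS) :=
  \matrix_(i, j) (if (i == j) && (enum_val i \in G) && (#|enum_val i| == s)
                  then 1 else 0).

Definition bcoef (k : fieldType) (sg tau : {set T}) : k :=
  \sum_(v in sg | tau == sg :\ v)
     (-1) ^+ #|[set u in sg | (enum_rank u < enum_rank v)%N]|.

(* boundary map acting on row vectors: c |-> c *m bdry *)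
Definition bdry (k : fieldType) : 'M[k]_(NS, NS) :=
  \matrix_(i, j) bcoef k (enum_val i) (enum_val j).

(* \tilde H_d(G; k) <> 0 : the d-cycles are not all d-boundaries
   (d-faces have d+1 elements). *)
Definition red_homology_nonzero (k : fieldType) (G : {set {set T}}) (d : nat) : bool :=
  ~~ ((chains k G d.+1 :&: kermx (bdry k)) <= chains k G d.+2 *m bdry k)%MS.

End Simplicial.

From HB Require Import structures.
From mathcomp Require Import all_boot all_order all_algebra zify ring.
Set Implicit Arguments. Unset Strict Implicit. Unset Printing Implicit Defensive.
Import GRing.Theory.
Local Open Scope ring_scope.

(* Let z be a nonzero 2-cycle of Gamma[W].  Every triangle of Gamma is rainbow
   for the balanced colouring, so z is encoded by a weight Y v x u on triples
   coloured 0, 1, 2; z being a cycle becomes the "cycle equations" (the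
   weights around every edge sum to zero), and minimality of W says that a
   cycle g Y vanishing around some vertex of W vanishes.  For such a weight,
   with W0 the vertices of colour 0, W12 the others and E the 1-2 edges of
   the support, the link matrix L (W0 x E) and the incidence matrix D (E x W12)
   satisfy L D = 0 and both have corank at most one (minimality), so
   |W| - 2 <= rank L + rank D <= |E|; each edge of E lies on two triangles,
   whence at least 2|W| - 4 triangles. *)

Lemma rank_ge_pred (k : fieldType) m n (A : 'M[k]_(m, n)) :
  (forall a : 'rV_m, a *m A = 0 -> (exists i, a 0 i = 0) -> a = 0) ->
  (m <= \rank A + 1)%N.
Proof.
case: m A => [|m] A kerA; first done.
pose e0 : 'M[k]_(m.+1, 1) := col ord0 1%:M.
have ker_meet : ((kermx A :&: kermx e0)%MS == 0).
  apply/rowV0P => v; rewrite sub_capmx => /andP[/sub_kermxP vA /sub_kermxP ve0].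
  apply: kerA => //; exists ord0.
  move/matrixP: ve0 => /(_ 0 0); rewrite !mxE (bigD1 ord0) //= big1.
    by rewrite !mxE eqxx mulr1 addr0.
  by move=> j /negbTE nj; rewrite !mxE nj mulr0.
have := mxrank_mul_ker (kermx A) e0.
rewrite (eqP ker_meet) mxrank0 addn0 mxrank_ker => rk_e0.
by have := rank_leq_col (kermx A *m e0); rewrite rk_e0 leq_subLR addnC.
Qed.

Lemma rank_add_le (k : fieldType) m n p (L : 'M[k]_(m, n)) (D : 'M[k]_(n, p)) :
  L *m D = 0 -> (\rank L + \rank D <= n)%N.
Proof.
move=> LD; have /mxrankS : (L <= kermx D)%MS by apply/sub_kermxP.
by rewrite mxrank_ker; have := rank_leq_row D; lia.
Qed.

Lemma sum_nonzero_term (k : fieldType) (I : finType) (P : pred I) (F : I -> k) :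
  \sum_(i | P i) F i != 0 -> exists2 i, P i & F i != 0.
Proof.
move=> S; have [/existsP[i /andP[Pi Fi]]|/existsPn none] :=
  boolP [exists i, P i && (F i != 0)]; first by exists i.
by case/eqP: S; apply: big1 => i Pi; apply/eqP; have := none i; rewrite Pi negbK.
Qed.

Lemma sum0_other_nonzero (k : fieldType) (I : finType) (F : I -> k) i :
  \sum_j F j = 0 -> F i != 0 -> exists2 j, j != i & F j != 0.
Proof.
move=> F0 Fi; apply: sum_nonzero_term.
by move/eqP: F0; rewrite (bigD1 i) //= addrC addr_eq0 => /eqP ->; rewrite oppr_eq0.
Qed.

Definition ext_row (k : fieldType) (T : finType) (A : {pred T})
    (a : 'rV[k]_#|A|) (w : T) : k :=
  \sum_i (enum_val i == w)%:R * a 0 i.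

Lemma ext_rowE (k : fieldType) (T : finType) (A : {pred T}) (a : 'rV[k]_#|A|) i :
  ext_row a (enum_val i) = a 0 i.
Proof.
rewrite /ext_row (bigD1 i) //= eqxx mul1r big1 ?addr0 // => j ji.
by rewrite (inj_eq enum_val_inj) (negbTE ji) mul0r.
Qed.

Lemma sum_enum_val (k : fieldType) (I : finType) (A : {set I}) (F : I -> k) :
  (forall i, i \notin A -> F i = 0) -> \sum_i F i = \sum_(j < #|A|) F (enum_val j).
Proof.
move=> F0; rewrite -(big_enum_val (A := mem A)) /=.
by rewrite [LHS](bigID (mem A)) /= [X in _ + X]big1 ?addr0.
Qed.

(* A weight Y v x u on triples of vertices is thought of as
   a 2-chain on triangles {v, x, u} coloured 0, 1, 2 (in this order).  It
   satisfies the cycle equations when, for every edge, the weights of the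
   triangles through that edge sum to zero. *)
Definition cycle_eqs (k : fieldType) (T : finType) (H : T -> T -> T -> k) : Prop :=
  [/\ forall v x, \sum_u H v x u = 0,
      forall v u, \sum_x H v x u = 0 &
      forall x u, \sum_v H v x u = 0].

Lemma sum_triple (k : fieldType) (T : finType) (F : T * (T * T) -> k) :
  \sum_t F t = \sum_v \sum_x \sum_u F (v, (x, u)).
Proof.
under [RHS]eq_bigr do rewrite pair_big /=.
by rewrite pair_big /=; apply: eq_bigr => -[v [x u]].
Qed.

Section SelectTriples.
Variables (k : fieldType) (T : finType) (F : T * (T * T) -> k) (a b : T).

Lemma sum_select12 : \sum_(t | (t.1 == a) && (t.2.1 == b)) F t = \sum_u F (a, (b, u)).
Proof.
rewrite (reindex_onto (fun u => (a, (b, u))) (fun t => t.2.2)) /=;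
  last by move=> [v [x u]] /andP[/eqP /= -> /eqP /= ->].
by apply: eq_bigl => u; rewrite !eqxx.
Qed.

Lemma sum_select13 : \sum_(t | (t.1 == a) && (t.2.2 == b)) F t = \sum_x F (a, (x, b)).
Proof.
rewrite (reindex_onto (fun x => (a, (x, b))) (fun t => t.2.1)) /=;
  last by move=> [v [x u]] /andP[/eqP /= -> /eqP /= ->].
by apply: eq_bigl => x; rewrite !eqxx.
Qed.

Lemma sum_select23 : \sum_(t | (t.2.1 == a) && (t.2.2 == b)) F t = \sum_v F (v, (a, b)).
Proof.
rewrite (reindex_onto (fun v => (v, (a, b))) (fun t => t.1)) /=;
  last by move=> [v [x u]] /andP[/eqP /= -> /eqP /= ->].
by apply: eq_bigl => v; rewrite !eqxx.
Qed.
End SelectTriples.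

Lemma cycle_eqs_sum (k : fieldType) (T : finType) (H : T -> T -> T -> k) :
  cycle_eqs H -> forall A : T -> T -> k,
  [/\ \sum_t H t.1 t.2.1 t.2.2 * A t.1 t.2.1 = 0,
      \sum_t H t.1 t.2.1 t.2.2 * A t.1 t.2.2 = 0 &
      \sum_t H t.1 t.2.1 t.2.2 * A t.2.1 t.2.2 = 0].
Proof.
case=> Hu Hx Hv A; rewrite !sum_triple /=; split.
- by apply: big1 => v _; apply: big1 => x _; rewrite -mulr_suml Hu mul0r.
- by apply: big1 => v _; rewrite exchange_big; apply: big1 => u _;
    rewrite -mulr_suml Hx mul0r.
- rewrite exchange_big; apply: big1 => x _; rewrite exchange_big.
  by apply: big1 => u _; rewrite -mulr_suml Hv mul0r.
Qed.

Section ColouredCycle.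
Variables (k : fieldType) (T : finType) (colour : T -> nat) (W : {set T}).
Variable Y : T -> T -> T -> k.

Hypothesis Y_colour : forall v x u, Y v x u != 0 ->
  [/\ colour v = 0, colour x = 1 & colour u = 2]%N.
Hypothesis Y_inW : forall v x u, Y v x u != 0 -> [/\ v \in W, x \in W & u \in W].
Hypothesis Y_cycle : cycle_eqs Y.
Hypothesis Y_nonzero : exists v x u, Y v x u != 0.
(* Minimality: a reweighting g Y of Y that is still a cycle and vanishes on
   all triangles through some vertex of W vanishes altogether. *)
Hypothesis Y_minimal : forall g : T -> T -> T -> k,
  cycle_eqs (fun v x u => g v x u * Y v x u) ->
  forall w, w \in W ->
  (forall v x u, [|| w == v, w == x | w == u] -> g v x u * Y v x u = 0) ->
  forall v x u, g v x u * Y v x u = 0.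

Let Y_sum_u := let: And3 h _ _ := Y_cycle in h.
Let Y_sum_x := let: And3 _ h _ := Y_cycle in h.
Let Y_sum_v := let: And3 _ _ h := Y_cycle in h.

Lemma Y_covers w : w \in W ->
  exists v x u, Y v x u != 0 /\ [|| w == v, w == x | w == u].
Proof.
move=> wW.
have [/existsP[[v [x u]] /andP[Yvxu wt]]|/existsPn none] := boolP
  [exists t : T * (T * T), (Y t.1 t.2.1 t.2.2 != 0) &&
                           [|| w == t.1, w == t.2.1 | w == t.2.2]].
  by exists v, x, u.
have [v [x [u /eqP[]]]] := Y_nonzero.
rewrite -[Y v x u]mul1r; apply: (Y_minimal (g := fun _ _ _ => 1)) wW _ v x u.
  by split=> *; under eq_bigr do rewrite mul1r;
    [apply: Y_sum_u | apply: Y_sum_x | apply: Y_sum_v].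
move=> v' x' u' wt; rewrite mul1r; apply/eqP.
by have := none (v', (x', u')); rewrite /= wt andbT negbK.
Qed.

Let W0 := W :&: [set w | colour w == 0%N].
Let W12 := W :\: [set w | colour w == 0%N].
Let E := [set p : T * T | [exists v, Y v p.1 p.2 != 0]].

Lemma Y_edge v x u : Y v x u != 0 -> (x, u) \in E.
Proof. by move=> Yvxu; rewrite inE; apply/existsP; exists v. Qed.

Lemma Y_W0 v x u : Y v x u != 0 -> v \in W0.
Proof.
by move=> Yvxu; have [cv _ _] := Y_colour Yvxu; have [vW _ _] := Y_inW Yvxu;
  rewrite in_setI vW inE cv.
Qed.

Definition link_mx : 'M[k]_(#|W0|, #|E|) :=
  \matrix_(i, j) Y (enum_val i) (enum_val j).1 (enum_val j).2.

Definition incidence_mx : 'M[k]_(#|E|, #|W12|) :=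
  \matrix_(j, i) ((enum_val i == (enum_val j).1)%:R - (enum_val i == (enum_val j).2)%:R).

Lemma sum_edges (F : T * T -> k) : (forall p, p \notin E -> F p = 0) ->
  \sum_(j < #|E|) F (enum_val j) = \sum_x \sum_u F (x, u).
Proof.
by move=> F0; rewrite -sum_enum_val // pair_big /=; apply: eq_bigr => -[].
Qed.

(* The boundary of the link of a colour-0 vertex is zero. *)
Lemma link_incidence : link_mx *m incidence_mx = 0.
Proof.
apply/matrixP => i i'; rewrite !mxE.
set v := enum_val i; set w := enum_val i'.
pose F p := Y v p.1 p.2 * ((w == p.1)%:R - (w == p.2)%:R).
rewrite (eq_bigr (fun j => F (enum_val j))); last by move=> j _; rewrite !mxE.
rewrite sum_edges; last first.
  move=> [x u] xuE; apply/eqP; rewrite mulf_eq0; apply/orP; left.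
  by apply: contraNT xuE => /Y_edge.
rewrite /F; under eq_bigr do under eq_bigr do rewrite mulrBr.
under eq_bigr do rewrite sumrB.
rewrite sumrB /= [X in X - _]big1 => [|x _]; last first.
  by rewrite -mulr_suml Y_sum_u mul0r.
rewrite exchange_big big1 ?subr0 //= => u _.
by rewrite -mulr_suml Y_sum_x mul0r.
Qed.

Lemma on_triangle0 v x u w : Y v x u != 0 -> colour w = 0%N ->
  [|| w == v, w == x | w == u] -> w = v.
Proof.
by move=> /Y_colour[_ cx cu] cw /or3P[/eqP|/eqP e|/eqP e] //;
  move: cw; rewrite e ?cx ?cu.
Qed.

Lemma on_triangle12 v x u w : Y v x u != 0 -> colour w != 0%N ->
  [|| w == v, w == x | w == u] -> (w == x) || (w == u).
Proof.
by move=> /Y_colour[cv _ _] cw /or3P[/eqP e|->|->]; rewrite ?orbT //;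
  move: cw; rewrite e cv.
Qed.

(* The link matrix has corank at most one: a left kernel vector a gives the
   cycle a(v) Y, which vanishes when a vanishes at some vertex. *)
Lemma rank_link_mx : (#|W0| <= \rank link_mx + 1)%N.
Proof.
apply: rank_ge_pred => a aL [i0 ai0].
have ker_cycle x u : \sum_v ext_row a v * Y v x u = 0.
  have [xuE|xuNE] := boolP ((x, u) \in E); last first.
    by apply: big1 => v _; apply/eqP; rewrite mulf_eq0; apply/orP; right;
      apply: contraNT xuNE => /Y_edge.
  move/matrixP: aL => /(_ 0 (enum_rank_in xuE (x, u))); rewrite !mxE => aLxu.
  rewrite -[RHS]aLxu (@sum_enum_val _ _ W0) => [|v vW0]; last first.
    apply/eqP; rewrite mulf_eq0; apply/orP; right.
    by apply: contraNT vW0 => /Y_W0.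
  by apply: eq_bigr => i _; rewrite mxE enum_rankK_in // ext_rowE.
have aY0 : forall v x u, ext_row a v * Y v x u = 0.
  have i0W : enum_val i0 \in W by have := enum_valP i0; rewrite in_setI => /andP[].
  apply: (Y_minimal _ i0W).
    split=> [v x|v u|//]; by rewrite -mulr_sumr ?Y_sum_u ?Y_sum_x mulr0.
  move=> v x u wt; have [->|Yvxu] := eqVneq (Y v x u) 0; first by rewrite mulr0.
  have := enum_valP i0; rewrite !inE => /andP[_ /eqP cw].
  by rewrite -(on_triangle0 Yvxu cw wt) ext_rowE ai0 mul0r.
apply/rowP => i; rewrite mxE -ext_rowE.
have := enum_valP i; rewrite !inE => /andP[wW /eqP cw].
have [v [x [u [Yvxu wt]]]] := Y_covers wW.
move/eqP: (aY0 v x u); rewrite mulf_eq0 (negbTE Yvxu) orbF.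
by rewrite (on_triangle0 Yvxu cw wt) => /eqP.
Qed.

(* The incidence matrix has corank at most one: a vector f in its kernel is
   constant along edges, so f(x) Y is a cycle, vanishing when f vanishes at
   some vertex; hence the graph E is connected on W12. *)
Lemma rank_incidence_mx : (#|W12| <= \rank incidence_mx + 1)%N.
Proof.
rewrite -mxrank_tr; apply: rank_ge_pred => f fD [i0 fi0].
have f_edge p : p \in E -> ext_row f p.1 = ext_row f p.2.
  move=> pE; move/matrixP: fD => /(_ 0 (enum_rank_in pE p)); rewrite !mxE => fDp.
  apply/eqP; rewrite -subr_eq0; apply/eqP; rewrite -[RHS]fDp /ext_row -sumrB.
  by apply: eq_bigr => i _; rewrite !mxE enum_rankK_in // mulrBr !(mulrC (f 0 i)).
have f_tri v x u : Y v x u != 0 -> ext_row f x = ext_row f u by move/Y_edge/f_edge.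
have fY0 : forall v x u, ext_row f x * Y v x u = 0.
  have i0W : enum_val i0 \in W by have := enum_valP i0; rewrite in_setD => /andP[].
  apply: (Y_minimal _ i0W).
    split=> [v x|v u|x u]; last by rewrite -mulr_sumr Y_sum_v mulr0.
      by rewrite -mulr_sumr Y_sum_u mulr0.
    rewrite (eq_bigr (fun x => ext_row f u * Y v x u)).
      by rewrite -mulr_sumr Y_sum_x mulr0.
    move=> x _; have [->|Yvxu] := eqVneq (Y v x u) 0; first by rewrite !mulr0.
    by rewrite (f_tri _ _ _ Yvxu).
  move=> v x u wt; have [->|Yvxu] := eqVneq (Y v x u) 0; first by rewrite mulr0.
  have := enum_valP i0; rewrite !inE => /andP[cw _].
  case/orP: (on_triangle12 Yvxu cw wt) => /eqP ew.
    by rewrite -ew ext_rowE fi0 mul0r.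
  by rewrite (f_tri _ _ _ Yvxu) -ew ext_rowE fi0 mul0r.
apply/rowP => i; rewrite mxE -ext_rowE.
have := enum_valP i; rewrite !inE => /andP[cw wW].
have [v [x [u [Yvxu wt]]]] := Y_covers wW.
have fx0 : ext_row f x = 0.
  by move/eqP: (fY0 v x u); rewrite mulf_eq0 (negbTE Yvxu) orbF => /eqP.
by case/orP: (on_triangle12 Yvxu cw wt) => /eqP ->; rewrite -?(f_tri _ _ _ Yvxu).
Qed.

Definition support3 := [set t : T * (T * T) | Y t.1 t.2.1 t.2.2 != 0].

(* Every edge of E lies on at least two triangles of the support. *)
Lemma card_support3 : (2 * #|E| <= #|support3|)%N.
Proof.
rewrite -[#|support3|]sum1_card.
rewrite (partition_big (fun t : T * (T * T) => t.2) (mem E)) /=;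
  last by move=> [v [x u]]; rewrite inE => /Y_edge.
rewrite mulnC -sum_nat_const; apply: leq_sum => p; rewrite inE => /existsP[v1 Y1].
have [v2 v21 Y2] := sum0_other_nonzero (Y_sum_v p.1 p.2) Y1.
rewrite (bigD1 (v1, p)) /=; last by rewrite inE Y1 eqxx.
by rewrite (bigD1 (v2, p)) //= !inE Y2 eqxx xpair_eqE negb_and v21.
Qed.

Lemma support3_lower_bound : (2 * #|W| - 4 <= #|support3|)%N.
Proof.
have cardW : #|W| = (#|W0| + #|W12|)%N by rewrite cardsID.
have := rank_link_mx; have := rank_incidence_mx.
have := rank_add_le link_incidence; have := card_support3.
by rewrite cardW; lia.
Qed.

End ColouredCycle.

Section TriangleBoundary.
Variables (k : fieldType) (T : finType).

Lemma enum_rank_ltNgt (a b : T) : a != b ->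
  (enum_rank b < enum_rank a)%N = ~~ (enum_rank a < enum_rank b)%N.
Proof.
move=> ab; rewrite -leqNgt ltn_neqAle andbC eq_sym.
by case: (enum_rank b <= enum_rank a)%N;
  rewrite //= (inj_eq val_inj) (inj_eq enum_rank_inj) ab.
Qed.

(* The sign of the permutation sorting (v, x, u) by rank. *)
Definition orient_sign (v x u : T) : k :=
  (-1) ^+ ((enum_rank x < enum_rank v) + (enum_rank u < enum_rank v)
           + (enum_rank u < enum_rank x))%N.

(* The coefficient of the edge tau in the boundary [x,u] - [v,u] + [v,x] of
   the triangle oriented as (v, x, u), an edge [a,b] being (-1)^(b < a)
   times the edge oriented by rank. *)
Definition obdry (v x u : T) (tau : {set T}) : k :=
    (tau == [set x; u])%:R * (-1) ^+ (enum_rank u < enum_rank x)%N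
  - (tau == [set v; u])%:R * (-1) ^+ (enum_rank u < enum_rank v)%N
  + (tau == [set v; x])%:R * (-1) ^+ (enum_rank x < enum_rank v)%N.

Lemma orient_sign_neq0 v x u : orient_sign v x u != 0.
Proof. by rewrite signr_eq0. Qed.

Lemma orient_sign_sq v x u : orient_sign v x u * orient_sign v x u = 1.
Proof. by rewrite -exprD addnn -signr_odd odd_double. Qed.

(* The sign bookkeeping behind bcoef_set3, for the three order relations
   b1 = (x < v), b2 = (u < v), b3 = (u < x) among the vertices. *)
Lemma sign_identity (b1 b2 b3 : bool) (a1 a2 a3 : k) :
  a1 * (-1) ^+ (b1 + b2)%N + a2 * (-1) ^+ ((~~ b1) + b3)%N
    + a3 * (-1) ^+ ((~~ b2) + (~~ b3))%N
  = (-1) ^+ (b1 + b2 + b3)%N * (a1 * (-1) ^+ b3 - a2 * (-1) ^+ b2 + a3 * (-1) ^+ b1).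
Proof. by case: b1; case: b2; case: b3; rewrite /= ?expr0 ?expr1 ?expr2; ring. Qed.

Section Triangle.
Variables v x u : T.
Hypotheses (vx : v != x) (vu : v != u) (xu : x != u).

Lemma sum_set3 (F : T -> k) : \sum_(w in [set v; x; u]) F w = F v + F x + F u.
Proof.
rewrite -setUA big_setU1 /=; last by rewrite !inE negb_or vx vu.
by rewrite big_setU1 ?inE //= big_set1 addrA.
Qed.

Lemma card_set3 (P : pred T) : #|[set w in [set v; x; u] | P w]| = (P v + P x + P u)%N.
Proof.
rewrite -sum1_card (eq_bigl (fun w => (w \in [set v; x; u]) && P w)) => [|w];
  last by rewrite !inE.
rewrite big_mkcondr /=.
rewrite -setUA big_setU1 /=; last by rewrite !inE negb_or vx vu.
by rewrite big_setU1 ?inE //= big_set1 addnA; case: (P v); case: (P x); case: (P u).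
Qed.

Lemma set3D1 : [/\ [set v; x; u] :\ v = [set x; u], [set v; x; u] :\ x = [set v; u]
                  & [set v; x; u] :\ u = [set v; x]].
Proof.
have xv : x != v by rewrite eq_sym.
have ux : u != x by rewrite eq_sym.
have uv : u != v by rewrite eq_sym.
split; apply/setP => y; rewrite !inE.
- by case: (eqVneq y v) => [->|]; rewrite ?(negbTE vx) ?(negbTE vu) ?andbT.
- by case: (eqVneq y x) => [->|]; rewrite ?(negbTE xv) ?(negbTE xu) ?andbT ?orbF.
- by case: (eqVneq y u) => [->|]; rewrite ?(negbTE uv) ?(negbTE ux) ?andbT ?orbF.
Qed.

Lemma card_face3 : #|[set v; x; u]| = 3.
Proof. by rewrite -setUA cardsU1 cards2 !inE negb_or vx vu xu. Qed.

Lemma bcoef_set3 tau :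
  bcoef k [set v; x; u] tau = orient_sign v x u * obdry v x u tau.
Proof.
have [Dv Dx Du] := set3D1.
have [xv uv ux] : [/\ x != v, u != v & u != x] by split; rewrite eq_sym.
rewrite /bcoef big_mkcondr sum_set3 Dv Dx Du !card_set3 !ltnn /= !add0n !addn0.
rewrite /orient_sign /obdry.
rewrite -(sign_identity (enum_rank x < enum_rank v)%N (enum_rank u < enum_rank v)%N).
rewrite (enum_rank_ltNgt xv) (enum_rank_ltNgt uv) (enum_rank_ltNgt ux).
by case: (tau == _); case: (tau == _); case: (tau == _);
  rewrite ?mul1r ?mul0r ?addr0 ?add0r.
Qed.
End Triangle.

End TriangleBoundary.

Section Chains.
Variables (k : fieldType) (T : finType).

Lemma chainsP (G : {set {set T}}) s (c : 'rV[k]_(NS T)) :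
  reflect (forall j, c 0 j != 0 -> (enum_val j \in G) && (#|enum_val j| == s))
          (c <= chains k G s)%MS.
Proof.
apply: (iffP idP) => [/submxP[w ->] j|supp].
  rewrite mxE (bigD1 j) //= big1 ?addr0 => [|i /negbTE ij]; last by rewrite mxE ij mulr0.
  by rewrite mxE eqxx /=; case: ifP => //; rewrite mulr0 eqxx.
suff -> : c = c *m chains k G s by apply: submxMl.
apply/rowP => j; rewrite mxE (bigD1 j) //= big1 ?addr0 => [|i /negbTE ij];
  last by rewrite mxE ij mulr0.
rewrite mxE eqxx /=; have [->|cj] := eqVneq (c 0 j) 0; first by rewrite mul0r.
by rewrite (supp _ cj) mulr1.
Qed.

Lemma chains4_eq0 (G : {set {set T}}) :
  (forall F, F \in G -> (#|F| <= 3)%N) -> chains k G 4 = 0.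
Proof.
move=> dimG; apply/matrixP => i j; rewrite !mxE.
by case: (i == j) => //=; case: ifP => // /andP[/dimG le3 /eqP c4]; rewrite c4 in le3.
Qed.

Lemma bdry_entry (c : 'rV[k]_(NS T)) tau :
  (c *m bdry T k) 0 (enum_rank tau) =
  \sum_(s : {set T}) c 0 (enum_rank s) * bcoef k s tau.
Proof.
rewrite mxE (reindex (@enum_rank _)) /=; last exact/onW_bij/enum_rank_bij.
by apply: eq_bigr => s _; rewrite mxE !enum_rankK.
Qed.

Lemma red_homology2P (G : {set {set T}}) :
  (forall F, F \in G -> (#|F| <= 3)%N) ->
  reflect (exists2 z : 'rV[k]_(NS T),
             (z <= chains k G 3)%MS /\ z *m bdry T k = 0 & z != 0)
          (red_homology_nonzero k G 2).
Proof.
move=> dimG; rewrite /red_homology_nonzero chains4_eq0 // mul0mx submx0.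
apply: (iffP rowV0Pn) => [[z] | [z [zC zB] z0]].
  by rewrite sub_capmx => /andP[zC /sub_kermxP zB] z0; exists z.
by exists z; rewrite // sub_capmx zC; apply/sub_kermxP.
Qed.

End Chains.

Section Colouring.
Variables (k : fieldType) (T : finType) (c : T -> 'I_3).

Definition colour (w : T) : nat := c w.

Definition rainbow (v x u : T) : bool :=
  [&& colour v == 0, colour x == 1 & colour u == 2]%N.
Definition rainbow3 (t : T * (T * T)) : bool := rainbow t.1 t.2.1 t.2.2.
Definition face3 (t : T * (T * T)) : {set T} := [set t.1; t.2.1; t.2.2].

Lemma rainbow_neq v x u : rainbow v x u -> [/\ v != x, v != u & x != u].
Proof.
by case/and3P => /eqP cv /eqP cx /eqP cu; split; apply/eqP => e;
  [move: cx | move: cu | move: cu]; rewrite -e ?cv ?cx.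
Qed.

Lemma face3_inj : {in rainbow3 &, injective face3}.
Proof.
move=> [v [x u]] [v' [x' u']] /and3P[/eqP cv /eqP cx /eqP cu].
move=> /and3P[/eqP cv' /eqP cx' /eqP cu'] e; rewrite /face3 /= in e.
have mem y : y \in [set v; x; u] -> y \in [set v'; x'; u'] by rewrite e.
have := mem v; have := mem x; have := mem u; rewrite !inE !eqxx ?orbT /=.
move=> /(_ isT) hu /(_ isT) hx /(_ isT) hv; congr (_, (_, _)).
- by case/orP: hv => [/orP[]|] /eqP // e'; move: cv; rewrite e' ?cx' ?cu'.
- by case/orP: hx => [/orP[]|] /eqP // e'; move: cx; rewrite e' ?cv' ?cu'.
- by case/orP: hu => [/orP[]|] /eqP // e'; move: cu; rewrite e' ?cv' ?cx'.
Qed.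

Lemma rainbow_face (F : {set T}) : {in F &, injective c} -> #|F| = 3 ->
  exists t, rainbow3 t /\ face3 t = F.
Proof.
move=> injF F3.
have imF : c @: F = [set: 'I_3].
  by apply/eqP; rewrite eqEcard subsetT cardsT card_ord card_in_imset // F3.
have onto (i : 'I_3) : exists2 w, w \in F & c w = i.
  have /imsetP[w wF ->] : i \in c @: F by rewrite imF inE.
  by exists w.
have [v vF cv] := onto (Ordinal (isT : 0 < 3)%N).
have [x xF cx] := onto (Ordinal (isT : 1 < 3)%N).
have [u uF cu] := onto (Ordinal (isT : 2 < 3)%N).
have rvxu : rainbow v x u by rewrite /rainbow /colour cv cx cu.
have [vx vu xu] := rainbow_neq rvxu.
exists (v, (x, u)); split => //; apply/eqP.
rewrite eqEcard /face3 /= card_face3 // F3 leqnn andbT.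
by apply/subsetP => y; rewrite !inE => /orP[/orP[]|] /eqP ->.
Qed.

Lemma sum_faces3 (F : {set T} -> k) :
  (forall s, F s != 0 -> exists t, rainbow3 t /\ face3 t = s) ->
  \sum_s F s = \sum_t (if rainbow3 t then F (face3 t) else 0).
Proof.
move=> suppF; rewrite -big_mkcond /= -(big_imset _ face3_inj) /=.
rewrite [LHS](bigID (mem (face3 @: rainbow3))) /= [X in _ + X]big1 ?addr0 // => s sNim.
apply/eqP; apply: contraNT sNim => /suppF[t [rt <-]].
by apply: imset_f.
Qed.

End Colouring.

Section RainbowChains.
Variables (k : fieldType) (T : finType) (c : T -> 'I_3).

Local Notation colour := (colour c).
Local Notation rainbow := (rainbow c).
Local Notation rainbow3 := (rainbow3 c).

Definition rainbow_supported (H : T -> T -> T -> k) : Prop :=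
  forall v x u, H v x u != 0 -> rainbow v x u.

Definition rchain (H : T -> T -> T -> k) : 'rV[k]_(NS T) :=
  \row_j \sum_(t : T * (T * T) | rainbow3 t && (face3 t == enum_val j))
            H t.1 t.2.1 t.2.2 * orient_sign k t.1 t.2.1 t.2.2.

Lemma rchain_face H t : rainbow3 t ->
  rchain H 0 (enum_rank (face3 t)) = H t.1 t.2.1 t.2.2 * orient_sign k t.1 t.2.1 t.2.2.
Proof.
move=> rt; rewrite mxE enum_rankK (bigD1 t) ?rt ?eqxx //= big1 ?addr0 //.
by move=> t' /andP[/andP[rt' /eqP e] /negP[]]; rewrite (face3_inj rt' rt e).
Qed.

Lemma rchain_supp H j : rchain H 0 j != 0 ->
  exists t, [/\ rainbow3 t, face3 t = enum_val j & H t.1 t.2.1 t.2.2 != 0].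
Proof.
rewrite mxE => /sum_nonzero_term[t /andP[rt /eqP e]].
by rewrite mulf_eq0 negb_or => /andP[Ht _]; exists t.
Qed.

Lemma bdry_rchain H tau : rainbow_supported H ->
  (rchain H *m bdry T k) 0 (enum_rank tau) =
  \sum_t H t.1 t.2.1 t.2.2 * obdry k t.1 t.2.1 t.2.2 tau.
Proof.
move=> suppH; rewrite bdry_entry (sum_faces3 (c := c)) => [|s]; last first.
  rewrite mulf_eq0 negb_or => /andP[/rchain_supp[t [rt + _]] _].
  by rewrite enum_rankK; exists t.
apply: eq_bigr => t _; case: ifP => rt; last first.
  have [->|/suppH rt'] := eqVneq (H t.1 t.2.1 t.2.2) 0; first by rewrite mul0r.
  by rewrite /rainbow3 rt' in rt.
have [vx vu xu] := rainbow_neq rt.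
rewrite rchain_face // bcoef_set3 // -mulrA (mulrA (orient_sign _ _ _ _)).
by rewrite orient_sign_sq mul1r.
Qed.

Lemma rchain_cycle H : rainbow_supported H -> cycle_eqs H -> rchain H *m bdry T k = 0.
Proof.
move=> suppH cH; apply/rowP => j; rewrite -(enum_valK j) bdry_rchain // mxE.
set tau := enum_val j; pose edge (a b : T) : k := (tau == [set a; b])%:R.
pose sedge (a b : T) : k := edge a b * (-1) ^+ (enum_rank b < enum_rank a)%N.
have [s_vx s_vu s_xu] := cycle_eqs_sum cH sedge.
under eq_bigr do rewrite /obdry mulrDr mulrBr.
by rewrite big_split sumrB /= s_vx s_vu s_xu subrr addr0.
Qed.

Lemma eq_set2_colour a b a' b' : colour a = colour a' -> colour b = colour b' ->
  colour a != colour b -> ([set a; b] == [set a'; b']) = (a == a') && (b == b').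
Proof.
move=> ea eb ab; apply/eqP/andP => [e|[/eqP -> /eqP ->]] //.
have : a \in [set a'; b'] by rewrite -e !inE eqxx.
have : b \in [set a'; b'] by rewrite -e !inE eqxx orbT.
rewrite !inE => /orP[/eqP eb'|->]; first by move: ab; rewrite eb' -ea eqxx.
by case/orP=> [->|/eqP ea'] //; move: ab; rewrite ea' -eb eqxx.
Qed.

Lemma neq_set2_colour a b a' b' :
  (colour a \notin [:: colour a'; colour b']) || (colour b \notin [:: colour a'; colour b']) ->
  ([set a; b] == [set a'; b']) = false.
Proof.
move=> colour_missing; apply/negbTE/eqP => e; move: colour_missing.
have mem y : y \in [set a; b] -> colour y \in [:: colour a'; colour b'].
  by rewrite e !inE => /orP[] /eqP ->; rewrite eqxx ?orbT.
by rewrite (mem a) ?(mem b) // !inE eqxx ?orbT.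
Qed.

Lemma obdry_edge01 v x u a b : rainbow v x u -> colour a = 0%N -> colour b = 1%N ->
  obdry k v x u [set a; b] =
    if (v == a) && (x == b) then (-1) ^+ (enum_rank b < enum_rank a)%N else 0.
Proof.
case/and3P => /eqP cv /eqP cx /eqP cu ca cb; rewrite /obdry.
rewrite (@neq_set2_colour a b x u) ?(@neq_set2_colour a b v u)
        ?(@eq_set2_colour a b v x) ?ca ?cb ?cv ?cx ?cu // !mul0r subrr add0r.
by rewrite ![_ == a]eq_sym ![_ == b]eq_sym; case: eqP => [->|_]; case: eqP => [->|_];
  rewrite ?mul1r ?mul0r.
Qed.

Lemma obdry_edge02 v x u a b : rainbow v x u -> colour a = 0%N -> colour b = 2%N ->
  obdry k v x u [set a; b] =
    if (v == a) && (u == b) then - (-1) ^+ (enum_rank b < enum_rank a)%N else 0.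
Proof.
case/and3P => /eqP cv /eqP cx /eqP cu ca cb; rewrite /obdry.
rewrite (@neq_set2_colour a b x u) ?(@neq_set2_colour a b v x)
        ?(@eq_set2_colour a b v u) ?ca ?cb ?cv ?cx ?cu // !mul0r sub0r addr0.
by rewrite ![_ == a]eq_sym ![_ == b]eq_sym; case: eqP => [->|_]; case: eqP => [->|_];
  rewrite ?mul1r ?mul0r ?oppr0.
Qed.

Lemma obdry_edge12 v x u a b : rainbow v x u -> colour a = 1%N -> colour b = 2%N ->
  obdry k v x u [set a; b] =
    if (x == a) && (u == b) then (-1) ^+ (enum_rank b < enum_rank a)%N else 0.
Proof.
case/and3P => /eqP cv /eqP cx /eqP cu ca cb; rewrite /obdry.
rewrite (@neq_set2_colour a b v u) ?(@neq_set2_colour a b v x)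
        ?(@eq_set2_colour a b x u) ?ca ?cb ?cv ?cx ?cu // !mul0r subr0 addr0.
by rewrite ![_ == a]eq_sym ![_ == b]eq_sym; case: eqP => [->|_]; case: eqP => [->|_];
  rewrite ?mul1r ?mul0r.
Qed.

(* Conversely, a rainbow weight whose chain is a cycle satisfies the cycle
   equations: on an edge of colours (i, j), the boundary only sees the
   triangles through that edge, all with the same orientation sign. *)
Lemma rchain_cycle_eqs H : rainbow_supported H -> rchain H *m bdry T k = 0 ->
  cycle_eqs H.
Proof.
move=> suppH B0.
have bdry0 tau : \sum_t H t.1 t.2.1 t.2.2 * obdry k t.1 t.2.1 t.2.2 tau = 0.
  by rewrite -bdry_rchain // B0 mxE.
have on_edge (P : pred (T * (T * T))) (s : k) tau :
    (forall t, rainbow3 t -> obdry k t.1 t.2.1 t.2.2 tau = if P t then s else 0) ->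
    (\sum_(t | P t) H t.1 t.2.1 t.2.2) * s = 0.
  move=> obP; rewrite -[RHS](bdry0 tau) mulr_suml big_mkcond /=.
  apply: eq_bigr => t _.
  have [->|/suppH rt] := eqVneq (H t.1 t.2.1 t.2.2) 0.
    by rewrite !mul0r; case: ifP.
  by rewrite obP //; case: ifP; rewrite ?mulr0.
have not_coloured (F : T -> k) (b : bool) :
    ~~ b -> (forall y, F y != 0 -> b) -> \sum_y F y = 0.
  by move=> nb suppF; apply: big1 => y _; apply/eqP; apply: contraNT nb => /suppF.
split=> [v x|v u|x u].
- have [/andP[/eqP cv /eqP cx]|ncol] := boolP ((colour v == 0) && (colour x == 1))%N.
    have := on_edge _ _ [set v; x] (fun t rt => obdry_edge01 rt cv cx).
    by rewrite sum_select12 => /eqP; rewrite mulf_eq0 signr_eq0 orbF => /eqP.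
  by apply: (not_coloured _ _ ncol) => u /suppH /and3P[-> -> _].
- have [/andP[/eqP cv /eqP cu]|ncol] := boolP ((colour v == 0) && (colour u == 2))%N.
    have := on_edge _ _ [set v; u] (fun t rt => obdry_edge02 rt cv cu).
    by rewrite sum_select13 => /eqP; rewrite mulf_eq0 oppr_eq0 signr_eq0 orbF => /eqP.
  by apply: (not_coloured _ _ ncol) => x /suppH /and3P[-> _ ->].
- have [/andP[/eqP cx /eqP cu]|ncol] := boolP ((colour x == 1) && (colour u == 2))%N.
    have := on_edge _ _ [set x; u] (fun t rt => obdry_edge12 rt cx cu).
    by rewrite sum_select23 => /eqP; rewrite mulf_eq0 signr_eq0 orbF => /eqP.
  by apply: (not_coloured _ _ ncol) => v /suppH /and3P[_ -> ->].
Qed.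

End RainbowChains.

Section MinimalCycle.
Variables (k : fieldType) (T : finType) (G : {set {set T}}) (W : {set T}).
Variable c : T -> 'I_3.
Hypothesis G_balanced : forall F, F \in G -> {in F &, injective c}.
Variable z : 'rV[k]_(NS T).
Hypotheses (zC : (z <= chains k (induced G W) 3)%MS) (zB : z *m bdry T k = 0).
Hypothesis z_neq0 : z != 0.
Hypothesis z_minimal : forall W' : {set T}, W' \proper W ->
  forall z' : 'rV[k]_(NS T),
  (z' <= chains k (induced G W') 3)%MS -> z' *m bdry T k = 0 -> z' = 0.

Definition zY (v x u : T) : k :=
  if rainbow c v x u then z 0 (enum_rank [set v; x; u]) * orient_sign k v x u else 0.

Lemma z_face s : z 0 (enum_rank s) != 0 -> [/\ s \in G, s \subset W & #|s| = 3].
Proof.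
move=> zs; have /chainsP/(_ _ zs) := zC.
by rewrite enum_rankK inE -andbA => /and3P[-> -> /eqP].
Qed.

Lemma z_rainbow s : z 0 (enum_rank s) != 0 -> exists t, rainbow3 c t /\ face3 t = s.
Proof. by case/z_face => sG _ s3; apply: rainbow_face (G_balanced sG) s3. Qed.

Lemma zY_supported : rainbow_supported c zY.
Proof. by move=> v x u; rewrite /zY; case: ifP; rewrite ?eqxx. Qed.

Lemma zY_face v x u : zY v x u != 0 -> z 0 (enum_rank [set v; x; u]) != 0.
Proof. by rewrite /zY; case: ifP => _; rewrite ?eqxx // mulf_eq0 negb_or => /andP[]. Qed.

Lemma rchain_zY : rchain c zY = z.
Proof.
apply/rowP => j; have [zj0|zj] := eqVneq (z 0 j) 0.
  rewrite zj0; apply/eqP; apply: contraT => /rchain_supp[t [_ e /zY_face]].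
  by rewrite -/(face3 t) e enum_valK zj0 eqxx.
have [t [rt e]] : exists t, rainbow3 c t /\ face3 t = enum_val j.
  by apply: z_rainbow; rewrite enum_valK.
by rewrite -(enum_valK j) -e rchain_face // /zY ifT // -mulrA orient_sign_sq mulr1.
Qed.

Lemma zY_cycle : cycle_eqs zY.
Proof. by apply: rchain_cycle_eqs zY_supported _; rewrite rchain_zY. Qed.

Lemma zY_colour v x u : zY v x u != 0 ->
  [/\ colour c v = 0, colour c x = 1 & colour c u = 2]%N.
Proof. by move/zY_supported/and3P => [/eqP ? /eqP ? /eqP ?]. Qed.

Lemma zY_inW v x u : zY v x u != 0 -> [/\ v \in W, x \in W & u \in W].
Proof.
by move=> /zY_face/z_face[_ /subsetP sW _]; split; apply: sW; rewrite !inE eqxx ?orbT.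
Qed.

Lemma zY_nonzero : exists v x u, zY v x u != 0.
Proof.
have [j zj] : exists j, z 0 j != 0.
  apply/existsP; apply: contraNT z_neq0 => /existsPn zj0.
  by apply/eqP/rowP => j; rewrite mxE; apply/eqP; have := zj0 j; rewrite negbK.
have [t [rt e]] : exists t, rainbow3 c t /\ face3 t = enum_val j.
  by apply: z_rainbow; rewrite enum_valK.
exists t.1, t.2.1, t.2.2; rewrite /zY ifT // mulf_eq0 negb_or orient_sign_neq0 andbT.
by change [set t.1; t.2.1; t.2.2] with (face3 t); rewrite e enum_valK.
Qed.

(* Minimality of the support of z transfers to its coordinates: a cycle g zY
   avoiding a vertex w of W is a 2-cycle of Gamma[W \ w], hence zero. *)
Lemma zY_minimal (g : T -> T -> T -> k) :
  cycle_eqs (fun v x u => g v x u * zY v x u) ->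
  forall w, w \in W ->
  (forall v x u, [|| w == v, w == x | w == u] -> g v x u * zY v x u = 0) ->
  forall v x u, g v x u * zY v x u = 0.
Proof.
move=> gc w wW gw; pose gY v x u := g v x u * zY v x u.
have gY_supp : rainbow_supported c gY.
  by move=> v x u; rewrite mulf_eq0 negb_or => /andP[_ /zY_supported].
have gY_off_w : (rchain c gY <= chains k (induced G (W :\ w)) 3)%MS.
  apply/chainsP => j /rchain_supp[t [rt <- gYt]].
  have /zY_face/z_face[tG tW t3] : zY t.1 t.2.1 t.2.2 != 0.
    by move: gYt; rewrite mulf_eq0 negb_or => /andP[].
  rewrite inE tG t3 eqxx andbT /=; apply/subsetP => y yt.
  rewrite in_setD1 (subsetP tW) // andbT; apply/eqP => yw; move/eqP: gYt; apply.
  by apply: gw; move: yt; rewrite -yw !inE => /orP[/orP[]|] ->; rewrite ?orbT.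
have gY0 := z_minimal (properD1 wW) gY_off_w (rchain_cycle gY_supp gc).
move=> v x u; have [rvxu|nr] := boolP (rainbow c v x u); last first.
  by rewrite /zY (negbTE nr) mulr0.
have := @rchain_face _ _ c gY (v, (x, u)) rvxu; rewrite gY0 mxE => /esym/eqP.
by rewrite mulf_eq0 (negbTE (orient_sign_neq0 _ _ _ _)) orbF => /eqP.
Qed.

Lemma support3_le_f2 : (#|support3 zY| <= f2 (induced G W))%N.
Proof.
have inj : {in support3 zY &, injective (@face3 T)}.
  move=> t t'; rewrite !inE => /zY_supported rt /zY_supported rt'.
  exact: (face3_inj (c := c)).
rewrite /f2 -(card_in_imset inj); apply/subset_leq_card/subsetP => F /imsetP[t + ->].
by rewrite inE => /zY_face/z_face[tG tW t3]; rewrite !inE tG tW t3 eqxx.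
Qed.

End MinimalCycle.

Theorem mainTheorem16 (k : fieldType) (T : finType) (G : {set {set T}})
    (W : {set T}) :
  is_complex G -> is_two_dim G -> balanced G ->
  red_homology_nonzero k (induced G W) 2 ->
  (forall W' : {set T}, W' \proper W ->
     ~~ red_homology_nonzero k (induced G W') 2) ->
  (2 * #|W| - 4 <= f2 (induced G W))%N.
Proof.
move=> _ [_ dimG] [c balancedG] homW hom_proper.
have dim_induced W' F : F \in induced G W' -> (#|F| <= 3)%N.
  by rewrite inE => /andP[/dimG].
have [z [zC zB] z_neq0] := red_homology2P k (dim_induced W) homW.
have z_minimal (W' : {set T}) : W' \proper W -> forall z' : 'rV[k]_(NS T),
    (z' <= chains k (induced G W') 3)%MS -> z' *m bdry T k = 0 -> z' = 0.
  move=> ltW z' z'C z'B; apply/eqP; apply: contraNT (hom_proper W' ltW) => z'_neq0.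
  by apply/(red_homology2P k (dim_induced W')); exists z'.
apply: leq_trans (support3_le_f2 c zC).
apply: (@support3_lower_bound k T (colour c) W (zY c z)).
- exact: zY_colour.
- exact: zY_inW zC.
- exact: (zY_cycle (W := W) balancedG zC zB).
- exact: (zY_nonzero (W := W) balancedG zC z_neq0).
- exact: zY_minimal zC z_minimal.
Qed.
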